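(* $(\Sigma_m,\mathrm{Md})$ has the propagation property for pseudo units and the propagation property for pseudo zeros: for all $\Sigma_m$-terms $t,r$ and every $\Sigma_m$-context $C[\,]$, $\mathrm{Md}\vdash 1_t\cdot C[r]=1_t\cdot C[1_t\cdot r]$ and $\mathrm{Md}\vdash 0_t\cdot C[r]=0_t\cdot C[0_t\cdot r]$.
   Context: $\Sigma_m=(0,1,+,\cdot,-,{}^{-1})$; $\mathrm{Md}$ is the set of equations $(x+y)+z=x+(y+z)$, $x+y=y+x$, $x+0=x$, $x+(-x)=0$, $(x\cdot y)\cdot z=x\cdot(y\cdot z)$, $x\cdot y=y\cdot x$, $1\cdot x=x$, $x\cdot(y+z)=x\cdot y+x\cdot z$, $(x^{-1})^{-1}=x$, $x\cdot(x\cdot x^{-1})=x$. $1_t$ abbreviates $t\cdot t^{-1}$, $0_t$ abbreviates $1+(-1_t)$. A context $C[\,]$ is a term with one hole. *)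

From Stdlib Require Import Arith.

Inductive term : Type :=
  | Var : nat -> term
  | Zero : term
  | One : term
  | Add : term -> term -> term
  | Mul : term -> term -> term
  | Opp : term -> term
  | Inv : term -> term.

Fixpoint subst (s : nat -> term) (t : term) : term :=
  match t with
  | Var n => s n
  | Zero => Zero
  | One => One
  | Add a b => Add (subst s a) (subst s b)
  | Mul a b => Mul (subst s a) (subst s b)
  | Opp a => Opp (subst s a)
  | Inv a => Inv (subst s a)
  end.

Definition vx := Var 0.
Definition vy := Var 1.
Definition vz := Var 2.

Inductive Md : term -> term -> Prop :=
  | Md_addA : Md (Add (Add vx vy) vz) (Add vx (Add vy vz))
  | Md_addC : Md (Add vx vy) (Add vy vx)
  | Md_add0 : Md (Add vx Zero) vx
  | Md_addN : Md (Add vx (Opp vx)) Zero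
  | Md_mulA : Md (Mul (Mul vx vy) vz) (Mul vx (Mul vy vz))
  | Md_mulC : Md (Mul vx vy) (Mul vy vx)
  | Md_mul1 : Md (Mul One vx) vx
  | Md_mulD : Md (Mul vx (Add vy vz)) (Add (Mul vx vy) (Mul vx vz))
  | Md_invK : Md (Inv (Inv vx)) vx
  | Md_pinv : Md (Mul vx (Mul vx (Inv vx))) vx.

Inductive derives (E : term -> term -> Prop) : term -> term -> Prop :=
  | d_ax : forall l r (s : nat -> term), E l r -> derives E (subst s l) (subst s r)
  | d_refl : forall t, derives E t t
  | d_sym : forall t u, derives E t u -> derives E u t
  | d_trans : forall t u v, derives E t u -> derives E u v -> derives E t v
  | d_add : forall a a' b b', derives E a a' -> derives E b b' ->
      derives E (Add a b) (Add a' b')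
  | d_mul : forall a a' b b', derives E a a' -> derives E b b' ->
      derives E (Mul a b) (Mul a' b')
  | d_opp : forall a a', derives E a a' -> derives E (Opp a) (Opp a')
  | d_inv : forall a a', derives E a a' -> derives E (Inv a) (Inv a').

Inductive context : Type :=
  | Hole : context
  | CAddL : context -> term -> context
  | CAddR : term -> context -> context
  | CMulL : context -> term -> context
  | CMulR : term -> context -> context
  | COpp : context -> context
  | CInv : context -> context.

Fixpoint plug (C : context) (r : term) : term :=
  match C with
  | Hole => r
  | CAddL c u => Add (plug c r) u
  | CAddR u c => Add u (plug c r)
  | CMulL c u => Mul (plug c r) u
  | CMulR u c => Mul u (plug c r)
  | COpp c => Opp (plug c r)
  | CInv c => Inv (plug c r)
  end.

Definition one_t (t : term) : term := Mul t (Inv t).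
Definition zero_t (t : term) : term := Add One (Opp (one_t t)).

(* Derivability from Md is a congruence, and the first eight equations of Md
   are exactly the axioms of a commutative ring, so derivability can be
   handed to the [ring] tactic as a setoid ring.  The whole argument then
   concerns idempotents e (e.e = e):
   - in the multiplicative monoid a pseudo inverse is unique: if
     x^2 y = x, y^2 x = y and x^2 z = x, z^2 x = z then y = z;
   - hence for an idempotent e the pseudo inverse of e.x is e.x^-1, i.e.
     (e.x)^-1 = e.x^-1, because e.x^-1 visibly is a pseudo inverse of e.x;
   - so multiplication by an idempotent commutes with every operation of
     Sigma_m, and by induction on the context e.C[r] = e.C[e.r].
   Finally 1_t = t.t^-1 is idempotent by the pseudo-inverse axiom, and
   0_t = 1 - 1_t is idempotent as the complement of an idempotent. *)

From Stdlib Require Import Setoid Morphisms Ring Ring_theory.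

Infix "=~" := (derives Md) (at level 70).

Definition subst3 (a b c : term) : nat -> term :=
  fun n => match n with 0 => a | 1 => b | _ => c end.

Ltac md_instance H a b c := exact (d_ax Md _ _ (subst3 a b c) H).

Lemma addA a b c : Add (Add a b) c =~ Add a (Add b c).
Proof. md_instance Md_addA a b c. Qed.
Lemma addC a b : Add a b =~ Add b a.
Proof. md_instance Md_addC a b Zero. Qed.
Lemma add0 a : Add a Zero =~ a.
Proof. md_instance Md_add0 a Zero Zero. Qed.
Lemma addN a : Add a (Opp a) =~ Zero.
Proof. md_instance Md_addN a Zero Zero. Qed.
Lemma mulA a b c : Mul (Mul a b) c =~ Mul a (Mul b c).
Proof. md_instance Md_mulA a b c. Qed.
Lemma mulC a b : Mul a b =~ Mul b a.
Proof. md_instance Md_mulC a b Zero. Qed.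
Lemma mul1 a : Mul One a =~ a.
Proof. md_instance Md_mul1 a Zero Zero. Qed.
Lemma mulD a b c : Mul a (Add b c) =~ Add (Mul a b) (Mul a c).
Proof. md_instance Md_mulD a b c. Qed.
Lemma invK a : Inv (Inv a) =~ a.
Proof. md_instance Md_invK a Zero Zero. Qed.
Lemma pinv a : Mul a (Mul a (Inv a)) =~ a.
Proof. md_instance Md_pinv a Zero Zero. Qed.

Add Parametric Relation : term (derives Md)
  reflexivity proved by (d_refl Md)
  symmetry proved by (d_sym Md)
  transitivity proved by (d_trans Md) as derives_Md_rel.

Add Parametric Morphism : Add
  with signature derives Md ==> derives Md ==> derives Md as Add_mor.
Proof. intros; apply d_add; assumption. Qed.
Add Parametric Morphism : Mul
  with signature derives Md ==> derives Md ==> derives Md as Mul_mor.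
Proof. intros; apply d_mul; assumption. Qed.
Add Parametric Morphism : Opp
  with signature derives Md ==> derives Md as Opp_mor.
Proof. intros; apply d_opp; assumption. Qed.
Add Parametric Morphism : Inv
  with signature derives Md ==> derives Md as Inv_mor.
Proof. intros; apply d_inv; assumption. Qed.

Definition tsub (x y : term) : term := Add x (Opp y).

Lemma Md_ring_theory : ring_theory Zero One Add Mul tsub Opp (derives Md).
Proof.
  constructor.
  - intro x. rewrite addC. apply add0.
  - apply addC.
  - intros; symmetry; apply addA.
  - apply mul1.
  - apply mulC.
  - intros; symmetry; apply mulA.
  - intros x y z. rewrite mulC, mulD, (mulC z x), (mulC z y). reflexivity.
  - intros; reflexivity.
  - apply addN.
Qed.

Lemma Md_ring_ext : ring_eq_ext Add Mul Opp (derives Md).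
Proof. constructor; [apply Add_mor_Proper | apply Mul_mor_Proper | apply Opp_mor_Proper]. Qed.

Add Ring Md_ring : Md_ring_theory (setoid derives_Md_rel Md_ring_ext).

Definition pseudo_inverse (x y : term) : Prop :=
  Mul (Mul x x) y =~ x /\ Mul (Mul y y) x =~ y.

(* x^-1 is a pseudo inverse of x; the second half is the pseudo-inverse
   axiom applied to x^-1, using x^-1^-1 = x. *)
Lemma inv_pseudo_inverse x : pseudo_inverse x (Inv x).
Proof.
  split.
  - transitivity (Mul x (Mul x (Inv x))); [ring | apply pinv].
  - rewrite <- (invK x) at 3.
    transitivity (Mul (Inv x) (Mul (Inv x) (Inv (Inv x)))); [ring | apply pinv].
Qed.

(* Pseudo inverses are unique: y = y.y.x = y.y.(x.x.z) = (y.y.x).x.z = y.x.z,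
   and symmetrically z = z.x.y. *)
Lemma pseudo_inverse_unique x y z :
  pseudo_inverse x y -> pseudo_inverse x z -> y =~ z.
Proof.
  intros [Hxy Hyx] [Hxz Hzx].
  assert (Hy : y =~ Mul y (Mul x z)).
  { transitivity (Mul (Mul y y) (Mul (Mul x x) z)); [rewrite Hxz; symmetry; exact Hyx |].
    transitivity (Mul (Mul (Mul y y) x) (Mul x z)); [ring | rewrite Hyx; reflexivity]. }
  assert (Hz : z =~ Mul z (Mul x y)).
  { transitivity (Mul (Mul z z) (Mul (Mul x x) y)); [rewrite Hxy; symmetry; exact Hzx |].
    transitivity (Mul (Mul (Mul z z) x) (Mul x y)); [ring | rewrite Hzx; reflexivity]. }
  rewrite Hy at 1. rewrite Hz at 2. ring.
Qed.

Definition idempotent (e : term) : Prop := Mul e e =~ e.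

(* For an idempotent e, inversion commutes with multiplication by e, since
   e.x^-1 is a pseudo inverse of e.x. *)
Lemma inv_idempotent_mul e x :
  idempotent e -> Inv (Mul e x) =~ Mul e (Inv x).
Proof.
  unfold idempotent. intro He. destruct (inv_pseudo_inverse x) as [Hx Hx'].
  apply (pseudo_inverse_unique (Mul e x)); [apply inv_pseudo_inverse | split].
  - transitivity (Mul (Mul e (Mul e e)) (Mul (Mul x x) (Inv x))); [ring |].
    rewrite Hx, !He. reflexivity.
  - transitivity (Mul (Mul e (Mul e e)) (Mul (Mul (Inv x) (Inv x)) x)); [ring |].
    rewrite Hx', !He. reflexivity.
Qed.

(* Each constructor of Sigma_m commutes with multiplication by e
   (ring identities for +, -, .; the previous lemma for ^-1). *)
Lemma idempotent_propagation e (C : context) (r : term) :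
  idempotent e -> Mul e (plug C r) =~ Mul e (plug C (Mul e r)).
Proof.
  unfold idempotent. intro He. induction C as [|c IH u|u c IH|c IH u|u c IH|c IH|c IH]; simpl.
  - transitivity (Mul (Mul e e) r); [rewrite He; reflexivity | ring].
  - transitivity (Add (Mul e (plug c r)) (Mul e u)); [ring | rewrite IH; ring].
  - transitivity (Add (Mul e (plug c r)) (Mul e u)); [ring | rewrite IH; ring].
  - transitivity (Mul (Mul e (plug c r)) u); [ring | rewrite IH; ring].
  - transitivity (Mul (Mul e (plug c r)) u); [ring | rewrite IH; ring].
  - transitivity (Opp (Mul e (plug c r))); [ring | rewrite IH; ring].
  - rewrite <- !(inv_idempotent_mul e) by exact He. rewrite IH. reflexivity.
Qed.

(* The pseudo unit 1_t = t.t^-1 is idempotent: (t.t^-1).(t.t^-1) = (t.t.t^-1).t^-1. *)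
Lemma one_t_idempotent t : idempotent (one_t t).
Proof.
  unfold idempotent, one_t.
  transitivity (Mul (Mul t (Mul t (Inv t))) (Inv t)); [ring | rewrite pinv; reflexivity].
Qed.

Lemma complement_idempotent e : idempotent e -> idempotent (Add One (Opp e)).
Proof.
  unfold idempotent. intro He.
  transitivity (Add One (Add (Opp (Add e e)) (Mul e e))); [ring | rewrite He; ring].
Qed.

Theorem mainTheorem7 :
  forall (t r : term) (C : context),
    derives Md (Mul (one_t t) (plug C r)) (Mul (one_t t) (plug C (Mul (one_t t) r))) /\
    derives Md (Mul (zero_t t) (plug C r)) (Mul (zero_t t) (plug C (Mul (zero_t t) r))).
Proof.
  intros t r C. split; apply idempotent_propagation.
  - apply one_t_idempotent.
  - apply complement_idempotent, one_t_idempotent.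
Qed.
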